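(* Let $L$ be a field of characteristic $p>0$ and let $Z,T$ be indeterminates over $L$. Let $g = Z^{p^e} - \alpha T^m + \beta$, where $\alpha,\beta \in L$ are nonzero and $e \ge 1$, $m>1$ are integers with $m$ coprime to $p$. Then $D = L[Z,T]/(g)$ does not admit any non-trivial exponential map.
   Context: For an $L$-algebra $D$ and an indeterminate $U$ over $D$, an $L$-algebra homomorphism $\phi = \phi_U : D \to D[U]$ is an exponential map on $D$ if (i) $\varepsilon_0 \circ \phi_U$ is the identity of $D$, where $\varepsilon_0 : D[U]\to D$ is evaluation at $U=0$; and (ii) $\phi_V \circ \phi_U = \phi_{V+U}$, where $\phi_V: D \to D[V]$ (same map with $U$ replaced by another indeterminate $V$) is extended to $D[U] \to D[V,U]$ by $\phi_V(U)=U$. The ring of invariants is $D^{\phi} = \{a\in D : \phi(a) = a\}$, and $\phi$ is non-trivial if $D^\phi \neq D$. *)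

From HB Require Import structures.
From mathcomp Require Import all_boot all_order all_algebra.
Set Implicit Arguments. Unset Strict Implicit. Unset Printing Implicit Defensive.
Import GRing.Theory.
Local Open Scope ring_scope.

(* Bivariate polynomials over L: {poly {poly L}}, inner variable Z, outer T. *)

Definition ev2 (L : fieldType) (D : comAlgType L) (z t : D)
  (q : {poly {poly L}}) : D :=
  (map_poly (fun r : {poly L} => (map_poly (in_alg D) r).[z]) q).[t].

Definition gpoly (L : fieldType) (p e m : nat) (alpha beta : L)
  : {poly {poly L}} :=
  ('X^(p ^ e)%N + beta%:P)%:P - (alpha%:P)%:P * 'X^m.

(* Exponential map on the L-algebra D, given as a ring morphism
   phi : D -> D[U] (U is the variable of {poly D}):
   - phi is L-linear (fixes the image of L), so phi is an L-algebra hom;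
   - (i)  evaluation at U = 0 after phi is the identity;
   - (ii) phi_V o phi_U = phi_{V+U}: in {poly {poly D}} the outer variable
          is U and the inner one is V. *)
Definition exponential_map (L : fieldType) (D : comAlgType L)
  (phi : {rmorphism D -> {poly D}}) : Prop :=
  [/\ forall c : L, phi (c%:A) = (c%:A)%:P,
      forall a : D, (phi a).[0] = a
    & forall a : D,
        map_poly phi (phi a) = (map_poly polyC (phi a)) \Po ('X + ('X)%:P)].

Definition invariants (L : fieldType) (D : comAlgType L)
  (phi : {rmorphism D -> {poly D}}) : pred D := fun a => phi a == a%:P.

Definition nontrivial_exp (L : fieldType) (D : comAlgType L)
  (phi : {rmorphism D -> {poly D}}) : Prop :=
  exists a : D, a \notin invariants phi.

From HB Require Import structures.
From mathcomp Require Import all_boot all_order all_algebra.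
From mathcomp Require Import zify.
Set Implicit Arguments. Unset Strict Implicit. Unset Printing Implicit Defensive.
Import GRing.Theory.
Local Open Scope ring_scope.

(* Write q = p^e, n = deg_U phi(t) and k = deg_U phi(z).  The ring D is reduced:
   for x = sum_{i<q} c_i(t) z^i, the power x^q = sum_i c_i(t)^q (alpha t^m - beta)^i
   lies in L[t], and its summands have the pairwise distinct degrees
   q deg c_i + m i since m is prime to q.  Hence the leading coefficients of
   phi(t)^j phi(z)^i never vanish, and z^q = alpha t^m - beta gives k q = n m.
   If n > 0 then n = q n', k = m n', and every nonzero d has
   deg phi(d) = n' (q j + m i) for some i, j.  The exponential law says that phi
   sends the coefficient of U^i in phi(a) to the i-th Hasse derivative of phi(a).
   Writing n' = r p^v with p not dividing r, the coefficient of U^(k - p^v) in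
   phi(z) is therefore mapped to a polynomial of degree exactly p^v, since
   C(k, p^v) = C(p^v m r, p^v) = m r <> 0 in characteristic p.  But p^v = n' w
   forces q j + m i = 1, which is impossible.  So n = 0, then k = 0, and phi is
   trivial on the generators t, z, hence on D. *)

Lemma coprime_weight_inj q m a b i j : coprime m q -> (i < q)%N -> (j < q)%N ->
  (q * a + m * i = q * b + m * j)%N -> i = j.
Proof.
move=> cmq; wlog le_ij : a b i j / (i <= j)%N.
  move=> W hi hj E; case: (leqP i j) => [|/ltnW] h; first exact: W E.
  by apply/esym/(W b a) => //; rewrite E.
move=> _ hj E.
have q_dvd : (q %| j - i)%N.
  have E' : (m * (j - i) = q * (a - b))%N by rewrite !mulnBr; lia.
  by rewrite -(@Gauss_dvdr q m) 1?coprime_sym // E' dvdn_mulr.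
have [|ji_gt0] := posnP (j - i); first lia.
by have := dvdn_leq ji_gt0 q_dvd; lia.
Qed.

Lemma coef_XaddC_exp (R : nzRingType) n i :
  (('X + 1 : {poly R}) ^+ n)`_i = 'C(n, i)%:R.
Proof.
elim: n i => [|n IH] [|i]; rewrite ?expr0 ?coef1 // exprSr mulrDr mulr1 coefD coefMX.
  by rewrite IH !bin0 add0r.
by rewrite !IH binS natrD addrC.
Qed.

Lemma bin_pexpM_pchar (R : comNzRingType) p v s : p \in [pchar R] ->
  'C(p ^ v * s, p ^ v)%:R = s%:R :> R.
Proof.
move=> hp; have pv_gt0 : (0 < p ^ v)%N by rewrite expn_gt0 prime_gt0 ?(pcharf_prime hp).
have hpv : [pchar {poly R}].-nat (p ^ v)%N.
  by rewrite pnatX pnatE ?(pcharf_prime hp) // pchar_poly hp.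
rewrite -coef_XaddC_exp exprM exprDn_pchar // expr1n.
have -> : ('X ^+ (p ^ v) + 1 : {poly R}) ^+ s = (('X + 1) ^+ s) \Po 'X^(p ^ v).
  by rewrite rmorphXn /= comp_polyD comp_polyX comp_polyC.
by rewrite coef_comp_poly_Xn // dvdnn divnn pv_gt0 coef_XaddC_exp bin1.
Qed.

Lemma size_sum_distinct (R : nzRingType) (I : finType) (F : I -> {poly R}) :
  {in [pred i | F i != 0] &, injective (fun i => size (F i))} ->
  size (\sum_i F i) = \max_i size (F i).
Proof.
move=> Finj; apply/anti_leq; rewrite size_sum /=.
case: (posnP #|I|) => [I0|/(eq_bigmax (fun i => size (F i))) [i0 max_i0]].
  by rewrite big_pred0 // => i; have := card0_eq I0 i; rewrite !inE.
rewrite max_i0; have [->|Fi0] := eqVneq (F i0) 0; first by rewrite size_poly0.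
have coef_lt_size (P : {poly R}) j : P`_j != 0 -> (j < size P)%N.
  by apply: contraR; rewrite -leqNgt => /(nth_default 0)->.
rewrite (polySpred Fi0) coef_lt_size // coef_sum (bigD1 i0) //= big1 ?addr0.
  by rewrite -lead_coefE lead_coef_eq0.
move=> i ne_ii0; apply: contraNeq ne_ii0 => /coef_lt_size Fi_top.
have Fi : F i != 0 by rewrite -size_poly_gt0 (leq_trans _ Fi_top).
apply/eqP/Finj; rewrite ?inE //; apply/anti_leq.
by rewrite -{1}max_i0 leq_bigmax (polySpred Fi0) Fi_top.
Qed.

Lemma size_sum_distinct_witness (R : nzRingType) (I : finType) (F : I -> {poly R}) :
  {in [pred i | F i != 0] &, injective (fun i => size (F i))} ->
  \sum_i F i != 0 -> exists2 i, F i != 0 & size (\sum_i F i) = size (F i).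
Proof.
move=> /size_sum_distinct -> sum_neq0.
have [i0 Fi0|F0] := pickP (fun i => F i != 0); last first.
  by move: sum_neq0; rewrite big1 ?eqxx // => i; have := F0 i => /negbFE/eqP.
have [|i max_i] := eq_bigmax (fun i => size (F i)); first by apply/card_gt0P; exists i0.
exists i => //; rewrite -size_poly_gt0 -max_i.
by rewrite (leq_trans _ (leq_bigmax i0)) // size_poly_gt0.
Qed.

Lemma lead_coef_exp_proper (R : nzRingType) (P : {poly R}) j :
  lead_coef P ^+ j != 0 -> lead_coef (P ^+ j) = lead_coef P ^+ j.
Proof.
elim: j => [|j IH]; first by rewrite !expr0 lead_coef1.
rewrite !exprSr => top_neq0.
have IHj : lead_coef P ^+ j != 0 by apply: contraNneq top_neq0 => ->; rewrite mul0r.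
by rewrite lead_coef_proper_mul IH.
Qed.

Lemma size_exp_proper (R : nzRingType) (P : {poly R}) j :
  lead_coef P ^+ j != 0 -> size (P ^+ j) = ((size P).-1 * j).+1.
Proof.
have [->|P0] := eqVneq P 0.
  by case: j => [|j]; rewrite ?(expr0, size_poly1, muln0) // lead_coef0 expr0n eqxx.
elim: j => [|j IH]; first by rewrite expr0 size_poly1 muln0.
rewrite !exprSr => top_neq0.
have IHj : lead_coef P ^+ j != 0 by apply: contraNneq top_neq0 => ->; rewrite mul0r.
rewrite size_proper_mul ?lead_coef_exp_proper // IH // (polySpred P0); lia.
Qed.

Lemma sum_exprn_pchar (R : comNzRingType) (I : Type) (r : seq I) (F : I -> R) n :
  [pchar R].-nat n -> (\sum_(i <- r) F i) ^+ n = \sum_(i <- r) F i ^+ n.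
Proof.
move=> hn; apply: (big_morph (fun x => x ^+ n)) => [x y|]; first exact: exprDn_pchar.
by rewrite expr0n; case/andP: hn => /gtn_eqF ->.
Qed.

Lemma coef_poly_XaY (R : comNzRingType) (P : {poly R}) i : (poly_XaY P)`_i = P^`N(i).
Proof.
elim/poly_ind: P i => [|P c IH] i; first by rewrite poly_XaY0 coef0 linear0.
have -> : poly_XaY (P * 'X + c%:P) = poly_XaY P * ('X + 'Y) + c%:P%:P.
  by rewrite /poly_XaY rmorphD rmorphM /= map_polyX !map_polyC comp_polyD comp_polyM
    comp_polyX !comp_polyC.
rewrite mulrDr !coefD coefMX coefMC coefC.
case: i => [|i] /=.
  by rewrite add0r IH !nderivn0.
by rewrite !IH addr0 nderivnMXaddC.
Qed.

Section ExponentialMap.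

Variables (R : comNzRingType) (phi : {rmorphism R -> {poly R}}).
Hypotheses (phi_eval0 : forall a, (phi a).[0] = a)
  (phi_comp : forall a, map_poly phi (phi a) = (map_poly polyC (phi a)) \Po ('X + ('X)%:P)).

Lemma exp_map_neq0 a : a != 0 -> phi a != 0.
Proof. by apply: contraNneq => phi_a0; rewrite -(phi_eval0 a) phi_a0 horner0. Qed.

Lemma exp_map_const a : (size (phi a) <= 1)%N -> phi a = a%:P.
Proof. by move=> /size1_polyC {1}->; rewrite -horner_coef0 phi_eval0. Qed.

Lemma exp_map_coef a i : phi (phi a)`_i = (phi a)^`N(i).
Proof. by rewrite -coef_map phi_comp coef_poly_XaY. Qed.

Lemma size_exp_map_coef a s : (s <= (size (phi a)).-1)%N ->
  lead_coef (phi a) *+ 'C((size (phi a)).-1, s) != 0 ->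
  size (phi (phi a)`_((size (phi a)).-1 - s)) = s.+1.
Proof.
set N := (size (phi a)).-1 => le_sN top_neq0.
have size_phi_a : size (phi a) = N.+1.
  rewrite prednK // size_poly_gt0 -lead_coef_eq0.
  by apply: contraNneq top_neq0 => ->; rewrite mul0rn.
apply/anti_leq; rewrite exp_map_coef; apply/andP; split.
  by rewrite (leq_trans (size_poly _ _)) // size_phi_a; lia.
apply: contraR top_neq0; rewrite -leqNgt => /(nth_default 0).
by rewrite coef_nderivn subnK // bin_sub // lead_coefE size_phi_a => ->.
Qed.

End ExponentialMap.

(* Outer variable Z, inner variable T: the opposite of the convention of [ev2]. *)
Definition evZT (L : fieldType) (D : comAlgType L) (z t : D)
  (R : {poly {poly L}}) : D := (map_poly (horner_alg t) R).[z].

Lemma horner2_map_in_alg (L : fieldType) (D : comAlgType L) (x y : D)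
  (R : {poly {poly L}}) :
  (map_poly (map_poly (in_alg D)) R).[x, y] = (map_poly (horner_alg y) R).[x].
Proof.
rewrite -[_.[y]]/(horner_eval y _) -horner_map /= -map_poly_comp horner_evalE hornerC.
by congr (_.[x]); apply: eq_map_poly.
Qed.

Lemma ev2_swapXY (L : fieldType) (D : comAlgType L) (z t : D) Q :
  ev2 z t Q = evZT z t (swapXY Q).
Proof.
by rewrite /ev2 /evZT -!horner2_map_in_alg -(swapXY_map (in_alg D)) horner2_swapXY.
Qed.

Section Presentation.

Variables (L : fieldType) (p e m : nat) (alpha beta : L) (D : comAlgType L) (z t : D).
Hypotheses (hp : p \in [pchar L]) (he : (0 < e)%N) (hm : (1 < m)%N)
  (hcop : coprime m p) (ha : alpha != 0).
Hypotheses (hgen : forall d : D, exists Q : {poly {poly L}}, ev2 z t Q = d)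
  (hker : forall Q : {poly {poly L}},
      ev2 z t Q = 0 <-> exists h : {poly {poly L}}, Q = h * gpoly p e m alpha beta).

Implicit Types (d x : D) (Q R : {poly {poly L}}).

Local Notation q := (p ^ e)%N.
Local Notation g := (gpoly p e m alpha beta).

Let p_prime : prime p. Proof. exact: pcharf_prime hp. Qed.
Let q_gt0 : (0 < q)%N. Proof. by rewrite expn_gt0 prime_gt0. Qed.
Let q_gt1 : (1 < q)%N. Proof. by rewrite -(expn0 p) ltn_exp2l ?prime_gt1. Qed.
Let coprime_mq : coprime m q. Proof. by rewrite coprime_pexpr. Qed.

Lemma swapXY_gpoly : swapXY g = 'X^q + (beta%:P - alpha%:P * 'X^m)%:P.
Proof.
rewrite /gpoly rmorphB rmorphM /= rmorphXn /= !swapXY_polyC swapXY_X.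
by rewrite rmorphD /= map_polyXn !map_polyC /= polyCB polyCM rmorphXn /= addrA.
Qed.

Lemma evZT_gpoly : evZT z t (swapXY g) = 0.
Proof. by rewrite -ev2_swapXY; apply/hker; exists 1; rewrite mul1r. Qed.

Lemma z_pow_q : z ^+ q = alpha%:A * t ^+ m - beta%:A.
Proof.
have := evZT_gpoly; rewrite swapXY_gpoly /evZT rmorphD /= map_polyXn map_polyC.
rewrite hornerD hornerXn hornerC /= rmorphB rmorphM /= rmorphXn /= horner_algX.
by rewrite !horner_algC => /eqP; rewrite addr_eq0 opprB => /eqP.
Qed.

Lemma evZT_eq0 R : (size R <= q)%N -> evZT z t R = 0 -> R = 0.
Proof.
move=> size_R; rewrite -[X in evZT _ _ X](swapXYK R) -ev2_swapXY => /hker [h R_eq].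
move: size_R; have {R_eq} -> : R = swapXY h * swapXY g.
  by apply: (can_inj swapXYK); rewrite rmorphM /= !swapXYK.
rewrite swapXY_gpoly; have [->|h0] := eqVneq (swapXY h) 0; first by rewrite mul0r.
rewrite size_Mmonic ?monicXnaddC // size_XnaddC // (polySpred h0); lia.
Qed.

Lemma horner_alg_t_eq0 c : horner_alg t c = 0 -> c = 0.
Proof.
move=> tc0; apply/polyC_inj/evZT_eq0; first by rewrite size_polyC (leq_trans (leq_b1 _)).
by rewrite /evZT map_polyC hornerC.
Qed.

Lemma evZT_surj d : exists2 R : {poly {poly L}}, (size R <= q)%N & evZT z t R = d.
Proof.
have [Q <-] := hgen d; rewrite ev2_swapXY.
have monG : swapXY g \is monic by rewrite swapXY_gpoly monicXnaddC.
have size_G : size (swapXY g) = q.+1 by rewrite swapXY_gpoly size_XnaddC.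
move: (swapXY g) monG size_G evZT_gpoly => G monG size_G evG.
exists (swapXY Q %% G); first by rewrite -ltnS -size_G ltn_modpN0 ?monic_neq0.
rewrite {2}(Pdiv.IdomainMonic.divp_eq monG (swapXY Q)) /evZT rmorphD rmorphM /=.
by rewrite hornerD hornerM -/(evZT z t G) evG mulr0 add0r.
Qed.

Lemma monomial_expansion d :
  exists N (c : 'I_q * 'I_N -> L), d = \sum_ij c ij *: (t ^+ ij.2 * z ^+ ij.1).
Proof.
have [R size_R <-] := evZT_surj d; set N := sizeY R.
exists N, (fun ij : 'I_q * 'I_N => R`_ij.1`_ij.2).
rewrite -[RHS](pair_bigA _ (fun (i : 'I_q) (j : 'I_N) => R`_i`_j *: (t ^+ j * z ^+ i))) /=.
rewrite /evZT (horner_coef_wide _ (leq_trans (size_poly _ _) size_R)).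
apply: eq_bigr => i _; rewrite coef_map /= -[horner_alg t _]/((map_poly (in_alg D) R`_i).[t]).
rewrite (horner_coef_wide _ (leq_trans (size_poly _ _) (max_size_coefXY R i))) mulr_suml.
by apply: eq_bigr => j _; rewrite coef_map /= mulr_algl scalerAl.
Qed.

Lemma expq_eq0 x : x ^+ q = 0 -> x = 0.
Proof.
have [R size_R <-] := evZT_surj x.
pose F := alpha%:P * 'X^m - beta%:P.
have tF : horner_alg t F = z ^+ q.
  by rewrite z_pow_q rmorphB rmorphM rmorphXn /= horner_algX !horner_algC.
have q_pchar : [pchar D].-nat q.
  by rewrite pnatX pnatE // (rmorph_pchar (in_alg D) hp).
rewrite /evZT (horner_coef_wide z (leq_trans (size_poly _ _) size_R)) sum_exprn_pchar //.
move=> xq0; have : \sum_(i < q) R`_i ^+ q * F ^+ i = 0.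
  apply: horner_alg_t_eq0; rewrite -xq0 rmorph_sum; apply: eq_bigr => i _.
  by rewrite rmorphM !rmorphXn /= coef_map exprMn tF -!exprM mulnC.
have size_F : size F = m.+1.
  rewrite size_polyDl mul_polyC ?size_scale ?size_polyXn // size_polyN.
  by rewrite (leq_ltn_trans (size_polyC_leq1 _)) // ltnS ltnW.
have F0 : F != 0 by rewrite -size_poly_gt0 size_F.
have size_term (i : 'I_q) : R`_i != 0 ->
    size (R`_i ^+ q * F ^+ i) = (q * (size R`_i).-1 + m * i).+1.
  move=> Ri0; rewrite size_mul ?expf_neq0 // (polySpred (expf_neq0 _ Ri0)).
  by rewrite (polySpred (expf_neq0 _ F0)) !size_exp size_F /= addnS mulnC.
move=> /(congr1 (fun P : {poly L} => size P)).
rewrite size_poly0 size_sum_distinct => [/eqP|].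
  rewrite -leqn0 => /bigmax_leqP /= term0.
  apply: big1 => i _; have := term0 i isT; rewrite leqn0 size_poly_eq0 mulf_eq0.
  rewrite !expf_eq0 q_gt0 (negbTE F0) andbF orbF coef_map => /eqP-> /=.
  by rewrite horner_algC scale0r mul0r.
move=> i j; rewrite !inE !mulf_eq0 !expf_eq0 q_gt0 !negb_or.
move=> /andP[Ri0 _] /andP[Rj0 _].
rewrite !size_term // => -[/(coprime_weight_inj coprime_mq (ltn_ord i) (ltn_ord j))].
exact: val_inj.
Qed.

Lemma nilpotent_eq0 x n : x ^+ n = 0 -> x = 0.
Proof.
move=> xn0; suff : x ^+ (q ^ n) = 0.
  elim: n {xn0} => [|n IH]; first by rewrite expn0 expr1.
  by move=> xqn0; apply/IH/expq_eq0; rewrite -exprM -expnSr.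
have le_n_qn : (n <= q ^ n)%N by rewrite ltnW // ltn_expl.
by rewrite -(subnK le_n_qn) exprD xn0 mulr0.
Qed.

Lemma z_neq0 : z != 0.
Proof.
apply/eqP => z0; have := @evZT_eq0 'X; rewrite size_polyX /evZT map_polyX hornerX z0.
by move=> /(_ q_gt1 erefl) /eqP; rewrite polyX_eq0.
Qed.

Lemma t_neq0 : t != 0.
Proof.
apply/eqP => t0; have := @horner_alg_t_eq0 'X; rewrite horner_algX t0.
by move=> /(_ erefl) /eqP; rewrite polyX_eq0.
Qed.

Section ExponentialMapOnD.

Variable phi : {rmorphism D -> {poly D}}.
Hypotheses (phi_scalar : forall c : L, phi c%:A = (c%:A)%:P)
  (phi_eval0 : forall a, (phi a).[0] = a)
  (phi_comp : forall a, map_poly phi (phi a) = (map_poly polyC (phi a)) \Po ('X + ('X)%:P)).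

Local Notation n1 := (size (phi t)).-1.
Local Notation k := (size (phi z)).-1.
Local Notation a := (lead_coef (phi t)).
Local Notation b := (lead_coef (phi z)).

Lemma phi_scale c x : phi (c *: x) = (c%:A)%:P * phi x.
Proof. by rewrite -(mulr_algl c x) rmorphM /= phi_scalar. Qed.

Lemma phi_z_pow_q : phi z ^+ q = (alpha%:A)%:P * phi t ^+ m - (beta%:A)%:P.
Proof. by rewrite -rmorphXn z_pow_q rmorphB rmorphM rmorphXn /= !phi_scalar. Qed.

Lemma lead_phi_t_exp_neq0 j : a ^+ j != 0.
Proof.
apply: contra_neq (exp_map_neq0 phi_eval0 t_neq0) => /nilpotent_eq0.
by move/eqP; rewrite lead_coef_eq0 => /eqP.
Qed.

Lemma lead_phi_z_exp_neq0 i : b ^+ i != 0.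
Proof.
apply: contra_neq (exp_map_neq0 phi_eval0 z_neq0) => /nilpotent_eq0.
by move/eqP; rewrite lead_coef_eq0 => /eqP.
Qed.

Lemma size_phi_z_exp i : size (phi z ^+ i) = (k * i).+1.
Proof. exact/size_exp_proper/lead_phi_z_exp_neq0. Qed.

Lemma exp_map_trivial_of_size_t : (size (phi t) <= 1)%N -> forall d, phi d = d%:P.
Proof.
move=> /(exp_map_const phi_eval0) phi_t.
have phi_z : phi z = z%:P.
  apply: (exp_map_const phi_eval0).
  have : ((k * q).+1 <= 1)%N.
    rewrite -size_phi_z_exp phi_z_pow_q phi_t -!rmorphXn -rmorphM -rmorphB.
    exact: size_polyC_leq1.
  by rewrite ltnS leqn0 muln_eq0 (gtn_eqF q_gt0) orbF; case: (size (phi z)) => [|[]].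
move=> d; have [N [c ->]] := monomial_expansion d.
rewrite !rmorph_sum; apply: eq_bigr => ij _.
by rewrite phi_scale rmorphM !rmorphXn /= phi_t phi_z -!rmorphXn -!rmorphM mulr_algl.
Qed.

Section NonConstantT.

Hypothesis n1_gt0 : (0 < n1)%N.

Let size_lead_phi_z_expq :
  size (phi z ^+ q) = (n1 * m).+1 /\ lead_coef (phi z ^+ q) = alpha%:A * a ^+ m.
Proof.
have alphaA_neq0 : alpha%:A != 0 :> D by rewrite scaler_eq0 negb_or ha oner_neq0.
have top_neq0 : lead_coef ((alpha%:A)%:P : {poly D}) * lead_coef (phi t ^+ m) != 0.
  rewrite lead_coefC lead_coef_exp_proper ?lead_phi_t_exp_neq0 //.
  by rewrite mulr_algl scaler_eq0 negb_or ha lead_phi_t_exp_neq0.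
have lead_mon : lead_coef ((alpha%:A)%:P * phi t ^+ m) = alpha%:A * a ^+ m.
  by rewrite lead_coef_proper_mul // lead_coefC lead_coef_exp_proper ?lead_phi_t_exp_neq0.
have size_mon : size ((alpha%:A)%:P * phi t ^+ m) = (n1 * m).+1.
  by rewrite size_proper_mul // size_exp_proper ?lead_phi_t_exp_neq0 // size_polyC alphaA_neq0.
have lt_const : (size (- (beta%:A)%:P : {poly D}) < size ((alpha%:A)%:P * phi t ^+ m)%R)%N.
  rewrite size_polyN size_mon (leq_ltn_trans (size_polyC_leq1 _)) // ltnS muln_gt0 n1_gt0.
  exact: ltnW.
by rewrite phi_z_pow_q size_polyDl // lead_coefDl // size_mon lead_mon.
Qed.

Lemma deg_phi_z_mulq : (k * q = n1 * m)%N.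
Proof.
by apply/eqP; rewrite -eqSS -size_phi_z_exp (proj1 size_lead_phi_z_expq).
Qed.

Lemma lead_phi_z_expq : b ^+ q = alpha%:A * a ^+ m.
Proof.
by rewrite -lead_coef_exp_proper ?lead_phi_z_exp_neq0 // (proj2 size_lead_phi_z_expq).
Qed.

Lemma lead_phi_monomial_neq0 i j : a ^+ j * b ^+ i != 0.
Proof.
apply/eqP => ab0.
have /nilpotent_eq0 ab_eq0 : (a * b) ^+ (i + j) = 0.
  by rewrite exprMn [in a ^+ _]addnC !exprD mulrACA ab0 mul0r.
have := lead_phi_z_exp_neq0 q.+1; rewrite exprSr lead_phi_z_expq.
by rewrite -(prednK (ltnW hm)) exprSr -!mulrA ab_eq0 !mulr0 eqxx.
Qed.

Lemma size_phi_monomial c i j : c != 0 ->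
  size (phi (c *: (t ^+ j * z ^+ i))) = (n1 * j + k * i).+1.
Proof.
move=> c0; have ab0 := lead_phi_monomial_neq0 i j.
have cab0 : c%:A * (a ^+ j * b ^+ i) != 0 by rewrite mulr_algl scaler_eq0 negb_or c0.
have lead_tz : lead_coef (phi t ^+ j * phi z ^+ i) = a ^+ j * b ^+ i.
  by rewrite lead_coef_proper_mul !lead_coef_exp_proper
    ?lead_phi_t_exp_neq0 ?lead_phi_z_exp_neq0.
rewrite phi_scale rmorphM !rmorphXn /= size_proper_mul ?lead_coefC ?lead_tz //.
rewrite size_proper_mul ?lead_coef_exp_proper ?lead_phi_t_exp_neq0 ?lead_phi_z_exp_neq0 //.
rewrite size_polyC size_phi_z_exp size_exp_proper ?lead_phi_t_exp_neq0 //.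
have -> : c%:A != 0 :> D by rewrite scaler_eq0 negb_or c0 oner_neq0.
by rewrite addSn addnS mulnC [(_ * i)%N]mulnC.
Qed.

Lemma deg_phi_t_z : exists2 n', n1 = (q * n')%N & k = (m * n')%N.
Proof.
have /dvdnP [n' n1E] : (q %| n1)%N.
  by rewrite -(@Gauss_dvdr q m) 1?coprime_sym // mulnC -deg_phi_z_mulq dvdn_mull.
exists n'; first by rewrite mulnC.
by apply/eqP; rewrite -(eqn_pmul2r q_gt0) deg_phi_z_mulq n1E mulnC mulnA.
Qed.

Lemma deg_exp_map d : d != 0 -> exists i j, (size (phi d)).-1 = (n1 * j + k * i)%N.
Proof.
move=> /(exp_map_neq0 phi_eval0); have [N [c ->]] := monomial_expansion d.
have [n' n1E kE] := deg_phi_t_z.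
pose F ij := phi (c ij *: (t ^+ ij.2 * z ^+ ij.1)).
have c_neq0 ij : F ij != 0 -> c ij != 0.
  by apply: contra_neq => c0; rewrite /F c0 scale0r rmorph0.
have size_F ij : F ij != 0 -> size (F ij) = (n1 * ij.2 + k * ij.1).+1.
  by move=> /c_neq0 /(size_phi_monomial ij.1 ij.2).
have n'_gt0 : (0 < n')%N by move: n1_gt0; rewrite n1E muln_gt0 => /andP[].
rewrite rmorph_sum -/(\sum_ij F ij) => /size_sum_distinct_witness [].
  move=> [i j] [i' j']; rewrite !inE => /size_F -> /size_F -> [].
  rewrite n1E kE -!mulnA !(mulnCA _ n') -!mulnDr => /eqP.
  rewrite eqn_pmul2l // => /eqP E.
  have ii' := val_inj (coprime_weight_inj coprime_mq (ltn_ord i) (ltn_ord i') E).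
  by move/eqP: E; rewrite ii' eqn_add2r eqn_pmul2l // => /eqP/val_inj ->.
by move=> ij /size_F -> ->; exists ij.1, ij.2.
Qed.

End NonConstantT.

Lemma exp_map_trivial d : phi d = d%:P.
Proof.
have [n1_0|n1_gt0] := posnP n1.
  by apply: exp_map_trivial_of_size_t; move: n1_0; case: (size (phi t)) => [|[]].
exfalso; have [n' n1E kE] := deg_phi_t_z n1_gt0.
have n'_gt0 : (0 < n')%N by move: n1_gt0; rewrite n1E muln_gt0 => /andP[].
have [r p_cop_r n'E] := pfactor_coprime p_prime n'_gt0.
set s := (p ^ logn p n')%N in n'E.
have s_gt0 : (0 < s)%N by rewrite expn_gt0 prime_gt0.
have kE' : k = (s * (m * r))%N by rewrite kE n'E; lia.
have top_neq0 : b *+ 'C(k, s) != 0.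
  rewrite -scaler_nat kE' bin_pexpM_pchar // scaler_eq0 negb_or -(dvdn_pcharf hp).
  rewrite Euclid_dvdM // negb_or -!prime_coprime // coprime_sym hcop p_cop_r /=.
  by have := lead_phi_z_exp_neq0 1; rewrite expr1.
have r_gt0 : (0 < r)%N by move: n'_gt0; rewrite n'E muln_gt0 => /andP[].
have le_s_k : (s <= k)%N by rewrite kE' leq_pmulr // muln_gt0 r_gt0 (ltnW hm).
have size_del := size_exp_map_coef phi_comp le_s_k top_neq0.
have del_neq0 : (phi z)`_(k - s) != 0.
  by apply: contra_eq_neq size_del => ->; rewrite rmorph0 size_poly0.
have [i [j]] := deg_exp_map n1_gt0 del_neq0; rewrite size_del /= n1E kE n'E.
move=> E; have {E} : (s * 1 = s * (r * (q * j + m * i)))%N by rewrite muln1 {1}E; nia.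
move/eqP; rewrite eqn_pmul2l // eq_sym muln_eq1 => /andP[_ /eqP].
by case: j i => [|j] [|i]; rewrite ?muln0 ?mulnS; lia.
Qed.

End ExponentialMapOnD.

End Presentation.

Theorem lemma3p2 (L : fieldType) (p e m : nat) (alpha beta : L)
  (D : comAlgType L) (z t : D)
  (hp : p \in [pchar L]) (he : (0 < e)%N) (hm : (1 < m)%N)
  (hcop : coprime m p) (ha : alpha != 0) (hb : beta != 0)
  (hgen : forall d : D, exists q : {poly {poly L}}, ev2 z t q = d)
  (hker : forall q : {poly {poly L}},
      ev2 z t q = 0 <-> exists h : {poly {poly L}}, q = h * gpoly p e m alpha beta) :
  forall phi : {rmorphism D -> {poly D}},
    exponential_map phi -> ~ nontrivial_exp phi.
Proof.
move=> phi [phi_scalar phi_eval0 phi_comp] [d]; apply/negP; rewrite negbK unfold_in.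
rewrite /invariants.
by rewrite (exp_map_trivial hp he hm hcop ha hgen hker phi_scalar phi_eval0 phi_comp).
Qed.
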